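(* Let $d_1,\dots,d_n\ge1$, $\Delta=\Delta^{d_1}\times\cdots\times\Delta^{d_n}$, $N=\sum_i d_i$, and $f:\operatorname{vert}(\Delta)\to\mathbb{R}$. For $\boldsymbol{j}\in\mathcal{G}=\prod_i\{0,\dots,d_i\}$ let $\alpha(\boldsymbol{j})=f(\boldsymbol{v}_{1j_1},\dots,\boldsymbol{v}_{nj_n})$, and for $\pi\in\Pi$ with point representation $\boldsymbol{j}^0,\dots,\boldsymbol{j}^N$ let $f^\pi(\boldsymbol{z})=\alpha(\boldsymbol{j}^0)+\sum_{t\in[N]}(\alpha(\boldsymbol{j}^t)-\alpha(\boldsymbol{j}^{t-1}))z_{\pi_t}$. If $f$ is supermodular, then $$\operatorname{conv}\{(\boldsymbol{z},\mu)\in\operatorname{vert}(\Delta)\times\mathbb{R}:\mu\le f(\boldsymbol{z})\}=\{(\boldsymbol{z},\mu)\in\Delta\times\mathbb{R}:\mu\le f^\pi(\boldsymbol{z})\ \forall\pi\in\Pi\}.$$ If $f$ is submodular, then $\operatorname{conv}\{(\boldsymbol{z},\mu)\in\operatorname{vert}(\Delta)\times\mathbb{R}:\mu\ge f(\boldsymbol{z})\}=\{(\boldsymbol{z},\mu)\in\Delta\times\mathbb{R}:\mu\ge f^\pi(\boldsymbol{z})\ \forall\pi\in\Pi\}$.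
   Context: $\Delta^d=\{\boldsymbol{z}\in\mathbb{R}^d:1\ge z_1\ge\cdots\ge z_d\ge0\}$; variables $\boldsymbol{z}=(\boldsymbol{z}_1,\dots,\boldsymbol{z}_n)$, $\boldsymbol{z}_i=(z_{i1},\dots,z_{id_i})$. Vertices of $\Delta^{d_i}$: $\boldsymbol{v}_{i0}=\boldsymbol{0}$, $\boldsymbol{v}_{ij}$ = vector with first $j$ coordinates $1$ and the rest $0$; $\operatorname{vert}(\Delta)=\prod_i\{\boldsymbol{v}_{i0},\dots,\boldsymbol{v}_{id_i}\}$. Super/submodularity of $f$ is with respect to componentwise max/min on $\operatorname{vert}(\Delta)$ ($f(\boldsymbol{u}\vee\boldsymbol{w})+f(\boldsymbol{u}\wedge\boldsymbol{w})\ge f(\boldsymbol{u})+f(\boldsymbol{w})$ for supermodular, $\le$ for submodular). Staircase: $\pi=(\pi_1,\dots,\pi_N)$, $\pi_t=(\pi_t(1),\pi_t(2))$, $\pi_t(1)\in[n]$ occurring exactly $d_i$ times for each $i$, $\pi_t(2)=|\{s\le t:\pi_s(1)=\pi_t(1)\}|$; $\Pi$ the set of staircases; $z_{\pi_t}=z_{\pi_t(1),\pi_t(2)}$; point representation $\boldsymbol{j}^0=\boldsymbol{0}$, $\boldsymbol{j}^t=\boldsymbol{j}^{t-1}+\boldsymbol{e}_{\pi_t(1)}$. *)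

From mathcomp Require Import all_boot all_order all_algebra.
From mathcomp Require Import reals.
Set Implicit Arguments. Unset Strict Implicit. Unset Printing Implicit Defensive.
Import Order.TTheory GRing.Theory Num.Theory.
Local Open Scope ring_scope.

(* Coordinates of Delta = Delta^{d_1} x ... x Delta^{d_n}:
   coordinate (i, k) with k : 'I_(d i) is z_{i,k+1} (0-indexed k). *)
Definition dcoord (n : nat) (d : 'I_n -> nat) := {i : 'I_n & 'I_(d i)}.

Definition mkc n (d : 'I_n -> nat) (i : 'I_n) (k : 'I_(d i)) : dcoord d :=
  Tagged (fun i => 'I_(d i)) k.

(* zc z i k = z_{i,k+1} when k < d i (0 otherwise, never used). *)
Definition zc (R : numDomainType) n (d : 'I_n -> nat) (z : dcoord d -> R)
  (i : 'I_n) (k : nat) : R :=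
  match @insub _ (fun k => k < d i)%N 'I_(d i) k with
  | Some k' => z (mkc k') | None => 0 end.

Definition inDelta (R : numDomainType) n (d : 'I_n -> nat) (z : dcoord d -> R) :=
  (forall c, 0 <= z c <= 1) /\
  (forall i (k k' : 'I_(d i)), (k <= k')%N -> z (mkc k') <= z (mkc k)).

Definition grid n (d : 'I_n -> nat) (j : 'I_n -> nat) := forall i, (j i <= d i)%N.

(* vertex (v_{1 j_1}, ..., v_{n j_n}): first j_i coordinates of block i equal 1 *)
Definition vtx (R : numDomainType) n (d : 'I_n -> nat) (j : 'I_n -> nat) :
  dcoord d -> R := fun c => if (val (tagged c) < j (tag c))%N then 1 else 0.

Definition isVert (R : numDomainType) n (d : 'I_n -> nat) (z : dcoord d -> R) :=
  exists j, grid d j /\ z = @vtx R n d j.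

Definition vmax (R : numDomainType) n (d : 'I_n -> nat) (u w : dcoord d -> R) :
  dcoord d -> R := fun c => Num.max (u c) (w c).
Definition vmin (R : numDomainType) n (d : 'I_n -> nat) (u w : dcoord d -> R) :
  dcoord d -> R := fun c => Num.min (u c) (w c).

Definition supermodular (R : numDomainType) n (d : 'I_n -> nat)
  (f : (dcoord d -> R) -> R) :=
  forall u w, isVert u -> isVert w -> f u + f w <= f (vmax u w) + f (vmin u w).
Definition submodular (R : numDomainType) n (d : 'I_n -> nat)
  (f : (dcoord d -> R) -> R) :=
  forall u w, isVert u -> isVert w -> f (vmax u w) + f (vmin u w) <= f u + f w.

(* staircase: a sequence pi(1) of elements of [n], each i occurring d_i times *)
Definition staircase n (d : 'I_n -> nat) (s : seq 'I_n) :=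
  forall i, count_mem i s = d i.

Definition jpt n (s : seq 'I_n) (t : nat) : 'I_n -> nat :=
  fun i => count_mem i (take t s).

Definition alpha (R : numDomainType) n (d : 'I_n -> nat)
  (f : (dcoord d -> R) -> R) (j : 'I_n -> nat) : R := f (@vtx R n d j).

(* f^pi(z) = alpha(j^0) + sum_{t=1}^N (alpha(j^t) - alpha(j^{t-1})) z_{pi_t};
   here t is 0-indexed: the term t corresponds to pi_{t+1}, whose second
   component (1-indexed) is count of pi_{t+1}(1) in the first t+1 entries,
   i.e. 0-indexed coordinate = count in the first t entries. *)
Definition fpi (R : numDomainType) n (d : 'I_n -> nat)
  (f : (dcoord d -> R) -> R) (s : seq 'I_n) (z : dcoord d -> R) : R :=
  alpha f (jpt s 0) +
  \sum_(t < size s)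
     (alpha f (jpt s t.+1) - alpha f (jpt s t)) *
     zc z (tnth (in_tuple s) t) (count_mem (tnth (in_tuple s) t) (take t s)).

Definition conv (R : numDomainType) (C : Type) (S : (C -> R) * R -> Prop)
  (x : (C -> R) * R) : Prop :=
  exists (m : nat) (lam : 'I_m -> R) (p : 'I_m -> (C -> R) * R),
    (forall k, 0 <= lam k) /\ \sum_(k < m) lam k = 1 /\
    (forall k, S (p k)) /\
    (forall c, x.1 c = \sum_(k < m) lam k * (p k).1 c) /\
    x.2 = \sum_(k < m) lam k * (p k).2.

From mathcomp Require Import all_boot all_order all_algebra.
From mathcomp Require Import reals boolp.
From mathcomp Require Import zify ring lra.
Set Implicit Arguments. Unset Strict Implicit. Unset Printing Implicit Defensive.
Import Order.TTheory GRing.Theory Num.Theory.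
Local Open Scope ring_scope.

(* For a staircase pi, f^pi is the affine function interpolating f at the
   vertices v_{j^0}, ..., v_{j^N} of the simplex
   Delta_pi = {1 >= z_{pi_1} >= ... >= z_{pi_N} >= 0}, and these simplices
   cover Delta.  Supermodularity gives f <= f^pi at every vertex: walking along
   the staircase, f(v_{min(j^t, j)}) grows by at most the increment of f^pi, so
   the hull of the hypograph lies below every f^pi.  Conversely, listing the
   coordinates of z in Delta greedily in decreasing order gives a staircase
   with z in Delta_pi; then z is the convex combination of the v_{j^t} with
   weights z_{pi_t} - z_{pi_{t+1}}, and f^pi(z) is the same combination of the
   f(v_{j^t}).  The submodular case is the supermodular one for -f. *)

Section ConvexHull.
Variables (R : numDomainType) (C : Type).
Implicit Types (S : (C -> R) * R -> Prop) (z : C -> R) (mu : R).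

Definition affine (g : (C -> R) -> R) :=
  forall m (lam : 'I_m -> R) (p : 'I_m -> C -> R), \sum_(k < m) lam k = 1 ->
  g (fun c => \sum_(k < m) lam k * p k c) = \sum_(k < m) lam k * g (p k).

Lemma conv_sub S S' x : (forall p, S p -> S' p) -> conv S x -> conv S' x.
Proof.
move=> SS' [m [lam [p [lam_ge0 [lam1 [Sp hx]]]]]].
by exists m, lam, p; do 3!split => //; move=> k; apply/SS'/Sp.
Qed.

Lemma conv_oppr S z mu :
  conv S (z, mu) -> conv (fun p => S (p.1, - p.2)) (z, - mu).
Proof.
move=> [m [lam [p [lam_ge0 [lam1 [Sp [/= e1 e2]]]]]]].
exists m, lam, (fun k => ((p k).1, - (p k).2)); do !split => //=.
- by move=> k; rewrite opprK -surjective_pairing.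
- by rewrite e2 -sumrN; apply: eq_bigr => k _; rewrite mulrN.
Qed.

Lemma conv_le_affine S g z mu :
  affine g -> (forall p, S p -> p.2 <= g p.1) -> conv S (z, mu) -> mu <= g z.
Proof.
move=> g_affine Sg [m [lam [p [lam_ge0 [lam1 [Sp [/= ez ->]]]]]]].
rewrite (funext ez) g_affine //; apply: ler_sum => k _.
by apply: ler_wpM2l => //; apply: Sg.
Qed.

End ConvexHull.

Section Staircase.
Variables (R : numDomainType) (n : nat) (d : 'I_n -> nat).
Implicit Types (z : dcoord d -> R) (s : seq 'I_n) (f : (dcoord d -> R) -> R).

Lemma zcE z i (k : 'I_(d i)) : zc z i k = z (mkc k).
Proof. by rewrite /zc valK. Qed.

Lemma zc_vtx (j : 'I_n -> nat) i k :
  (j i <= d i)%N -> zc (@vtx R n d j) i k = if (k < j i)%N then 1 else 0.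
Proof.
move=> jd; rewrite /zc; case: insubP => [k' _ <-|]; first by rewrite /vtx.
by rewrite -leqNgt => dk; rewrite ltnNge (leq_trans jd dk).
Qed.

Lemma zc_sum m (lam : 'I_m -> R) (p : 'I_m -> dcoord d -> R) i k :
  zc (fun c => \sum_(l < m) lam l * p l c) i k = \sum_(l < m) lam l * zc (p l) i k.
Proof. by rewrite /zc; case: insub => //; rewrite big1 // => l _; rewrite mulr0. Qed.

Lemma inDelta_vtx (j : 'I_n -> nat) : inDelta (@vtx R n d j).
Proof.
split=> [c|i k k' kk']; first by rewrite /vtx; case: ifP; rewrite ?lexx ?ler01.
rewrite /vtx /=; case: ifP => [/(leq_ltn_trans kk') -> //|_].
by case: ifP; rewrite ?lexx ?ler01.
Qed.

Lemma inDelta_conv (S : (dcoord d -> R) * R -> Prop) z mu :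
  (forall p, S p -> inDelta p.1) -> conv S (z, mu) -> inDelta z.
Proof.
move=> SD [m [lam [p [lam_ge0 [lam1 [Sp [/= ez _]]]]]]].
have pD k := SD _ (Sp k).
split=> [c|i k k' kk']; rewrite ?ez.
  have p01 l : 0 <= (p l).1 c <= 1 by case: (pD l) => /(_ c).
  rewrite sumr_ge0 => [/=|l _]; last by rewrite mulr_ge0 // (andP (p01 l)).1.
  rewrite -lam1 ler_sum // => l _; rewrite ler_piMr //.
  by case/andP: (p01 l).
by apply: ler_sum => l _; apply: ler_wpM2l => //; case: (pD l) => _; apply.
Qed.

Lemma vmax_vtx (u w : 'I_n -> nat) :
  vmax (@vtx R n d u) (vtx R w) = vtx R (fun i => maxn (u i) (w i)).
Proof.
apply: funext => -[i k]; rewrite /vmax /vtx /= leq_max.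
by case: (k < u i)%N; case: (k < w i)%N; rewrite /= ?maxxx ?(max_l ler01) ?(max_r ler01).
Qed.

Lemma vmin_vtx (u w : 'I_n -> nat) :
  vmin (@vtx R n d u) (vtx R w) = vtx R (fun i => minn (u i) (w i)).
Proof.
apply: funext => -[i k]; rewrite /vmin /vtx /= leq_min.
by case: (k < u i)%N; case: (k < w i)%N; rewrite /= ?minxx ?(min_l ler01) ?(min_r ler01).
Qed.

Lemma jpt_succ x0 s t : (t < size s)%N ->
  jpt s t.+1 = fun i => (jpt s t i + (nth x0 s t == i))%N.
Proof.
move=> ts; apply: funext => i.
by rewrite /jpt (take_nth x0 ts) -cats1 count_cat /= addn0.
Qed.

Lemma jpt_grid s t : staircase d s -> grid d (jpt s t).
Proof.
by move=> sd i; rewrite -(sd i) -{2}(cat_take_drop t s) count_cat leq_addr.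
Qed.

Lemma jpt_size s : staircase d s -> jpt s (size s) = d.
Proof. by move=> sd; apply: funext => i; rewrite /jpt take_size sd. Qed.

(* [stair_coord z s t] is z_{pi_{t+1}}, and [stair_level z s t] is z_{pi_t}
   with the conventions z_{pi_0} = 1 and z_{pi_{N+1}} = 0. *)
Definition stair_coord z s t : R :=
  if drop t s is x :: _ then zc z x (count_mem x (take t s)) else 0.

Definition stair_level z s t : R :=
  if t is t'.+1 then stair_coord z s t' else 1.

Definition stair_weight z s t : R := stair_level z s t - stair_level z s t.+1.

Lemma stair_coord_nth x0 z s t : (t < size s)%N ->
  stair_coord z s t = zc z (nth x0 s t) (count_mem (nth x0 s t) (take t s)).
Proof. by move=> ts; rewrite /stair_coord (drop_nth x0 ts). Qed.

Lemma stair_coord_oversize z s t : (size s <= t)%N -> stair_coord z s t = 0.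
Proof. by move=> st; rewrite /stair_coord drop_oversize. Qed.

Lemma fpi_stair_coord f s z :
  fpi f s z = alpha f (jpt s 0) +
    \sum_(t < size s) (alpha f (jpt s t.+1) - alpha f (jpt s t)) * stair_coord z s t.
Proof.
congr (_ + _); apply: eq_bigr => t _.
set x := tnth (in_tuple s) t; rewrite (stair_coord_nth x) //.
by rewrite {1 2}/x (tnth_nth x).
Qed.

Lemma sum_by_parts (Z a : nat -> R) N :
  \sum_(t < N.+1) (Z t - Z t.+1) * a t =
  Z 0%N * a 0%N + \sum_(t < N) (a t.+1 - a t) * Z t.+1 - Z N.+1 * a N.
Proof.
elim: N => [|N IH]; first by rewrite big_ord_recr !big_ord0 /=; ring.
by rewrite big_ord_recr IH big_ord_recr /=; ring.
Qed.

Lemma sum_stair_weight_mul z s (a : nat -> R) :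
  \sum_(t < (size s).+1) stair_weight z s t * a t =
  a 0%N + \sum_(t < size s) (a t.+1 - a t) * stair_coord z s t.
Proof.
by rewrite sum_by_parts /= stair_coord_oversize // mul1r mul0r subr0.
Qed.

Lemma sum_stair_weight z s : \sum_(t < (size s).+1) stair_weight z s t = 1.
Proof.
under eq_bigr do rewrite -[stair_weight _ _ _]mulr1.
rewrite (sum_stair_weight_mul z s (fun=> 1)) big1 ?addr0 // => t _.
by rewrite subrr mul0r.
Qed.

Lemma fpi_stair_weight f s z :
  fpi f s z = \sum_(t < (size s).+1) stair_weight z s t * alpha f (jpt s t).
Proof.
by rewrite (sum_stair_weight_mul z s (fun t => alpha f (jpt s t))) fpi_stair_coord.
Qed.

(* Only the step t at which pi_{t+1} = (i, k+1) moves the vertex in coordinate (i, k). *)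
Lemma stair_weight_vtx z s c : staircase d s ->
  z c = \sum_(t < (size s).+1) stair_weight z s t * vtx R (jpt s t) c.
Proof.
case: c => i k sd.
set a := fun t => if (k < jpt s t i)%N then 1 else 0 : R.
rewrite (sum_stair_weight_mul z s a) {1}/a /jpt take0 /= add0r.
have step (t : 'I_(size s)) :
    (a t.+1 - a t) * stair_coord z s t = (a t.+1 - a t) * z (mkc k).
  rewrite (stair_coord_nth i) // /a (jpt_succ i) //=.
  case: eqP => [->|_]; last by rewrite addn0 subrr !mul0r.
  rewrite addn1 ltnS leq_eqVlt -/(jpt s t i).
  case: (k < jpt s t i)%N; first by rewrite orbT subrr !mul0r.
  by case: eqP => [<-|_]; rewrite ?zcE // subrr !mul0r.
rewrite (eq_bigr _ (fun t _ => step t)) -mulr_suml.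
rewrite -(big_mkord xpredT (fun t => a t.+1 - a t)) telescope_sumr //.
by rewrite /a jpt_size // ltn_ord /jpt take0 subr0 mul1r.
Qed.

Lemma fpi_affine f s : affine (fpi f s).
Proof.
move=> m lam p lam1; rewrite /fpi.
under eq_bigr => t _ do rewrite zc_sum mulr_sumr.
under [in RHS]eq_bigr => l _ do rewrite mulrDr mulr_sumr.
rewrite big_split /= -mulr_suml lam1 mul1r exchange_big /=.
by congr (_ + _); apply: eq_bigr => l _; apply: eq_bigr => t _; rewrite mulrCA.
Qed.

End Staircase.

Section Supermodular.
Variables (R : realDomainType) (n : nat) (d : 'I_n -> nat).
Variable f : (dcoord d -> R) -> R.
Hypothesis f_super : supermodular f.

Lemma alpha_supermodular (u w : 'I_n -> nat) : grid d u -> grid d w ->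
  alpha f u + alpha f w <=
  alpha f (fun i => maxn (u i) (w i)) + alpha f (fun i => minn (u i) (w i)).
Proof.
move=> ud wd; rewrite /alpha -vmax_vtx -vmin_vtx.
by apply: f_super; [exists u | exists w].
Qed.

(* Supermodularity with u := min(p + e_x, j) and w := p, whose join is p + e_x. *)
Lemma alpha_increment (p j : 'I_n -> nat) x :
  grid d j -> grid d p -> (p x < j x)%N ->
  alpha f (fun i => minn (p i + (x == i)) (j i)) - alpha f (fun i => minn (p i) (j i))
  <= alpha f (fun i => p i + (x == i))%N - alpha f p.
Proof.
move=> jd pd pj.
have minjd : grid d (fun i => minn (p i + (x == i)) (j i)).
  by move=> i; rewrite geq_min jd orbT.
have := alpha_supermodular minjd pd.
have -> : (fun i => maxn (minn (p i + (x == i)) (j i)) (p i)) =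
          (fun i => p i + (x == i))%N.
  by apply: funext => i; case: eqP => [<-|_] /=; lia.
have -> : (fun i => minn (minn (p i + (x == i)) (j i)) (p i)) =
          (fun i => minn (p i) (j i)).
  by apply: funext => i; case: eqP => [<-|_] /=; lia.
by rewrite lerBlDr addrAC lerBrDr.
Qed.

Lemma alpha_min_jpt_le s (j : 'I_n -> nat) T : grid d j -> staircase d s ->
  (T <= size s)%N ->
  alpha f (fun i => minn (jpt s T i) (j i)) <= alpha f (jpt s 0) +
    \sum_(t < T) (alpha f (jpt s t.+1) - alpha f (jpt s t)) *
                 stair_coord (@vtx R n d j) s t.
Proof.
move=> jd sd; elim: T => [|T IH] Ts.
  rewrite big_ord0 addr0; suff -> : (fun i => minn (jpt s 0 i) (j i)) = jpt s 0 by [].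
  by apply: funext => i; rewrite /jpt take0 /= min0n.
pose x0 := tnth (in_tuple s) (Ordinal Ts).
rewrite big_ord_recr /= (stair_coord_nth x0) // zc_vtx // -/(jpt s T _) (jpt_succ x0) //.
have {IH} := IH (ltnW Ts); set x := nth x0 s T.
case: ltnP => xj IH.
  have := alpha_increment jd (jpt_grid T sd) xj.
  rewrite mulr1; lra.
rewrite mulr0 addr0.
suff -> : (fun i => minn (jpt s T i + (x == i)) (j i)) =
          (fun i => minn (jpt s T i) (j i)) by [].
by apply: funext => i; case: eqP => [<-|_] /=; lia.
Qed.

Lemma supermodular_le_fpi s (j : 'I_n -> nat) : grid d j -> staircase d s ->
  f (@vtx R n d j) <= fpi f s (@vtx R n d j).
Proof.
move=> jd sd; have := alpha_min_jpt_le jd sd (leqnn (size s)).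
rewrite (jpt_size sd) fpi_stair_coord.
suff -> : (fun i => minn (d i) (j i)) = j by [].
by apply: funext => i; apply/minn_idPr.
Qed.

End Supermodular.

Lemma sum_count_mem n (s : seq 'I_n) : (\sum_(i < n) count_mem i s)%N = size s.
Proof.
elim: s => [|x s IH] /=; first by rewrite big1.
rewrite big_split /= IH (bigD1 x) //= eqxx big1 // => i /negbTE.
by rewrite eq_sym => ->.
Qed.

Lemma staircase_of_count_le n (d : 'I_n -> nat) (s : seq 'I_n) :
  (forall i, count_mem i s <= d i)%N -> size s = (\sum_(i < n) d i)%N ->
  staircase d s.
Proof.
move=> cd sd i; apply/eqP; rewrite eqn_leq cd /= leqNgt; apply/negP => ci.
suff : (size s < \sum_(i < n) d i)%N by rewrite sd ltnn.
rewrite -sum_count_mem (bigD1 i) //= [X in (_ < X)%N](bigD1 i) //= -addSn.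
by apply: leq_add => //; apply: leq_sum.
Qed.

Section Greedy.
Variables (R : realDomainType) (n : nat) (d : 'I_n -> nat).
Variable z : dcoord d -> R.
Hypothesis zD : inDelta z.

Lemma zc_itv i k : 0 <= zc z i k <= 1.
Proof. by rewrite /zc; case: insub => [k'|]; [apply: zD.1 | rewrite lexx ler01]. Qed.

Lemma zc_mono i k k' : (k <= k')%N -> (k' < d i)%N -> zc z i k' <= zc z i k.
Proof.
move=> kk' k'd; have kd := leq_ltn_trans kk' k'd.
rewrite /zc (insubT (fun k => k < d i)%N k'd) (insubT (fun k => k < d i)%N kd) /=.
exact: (zD.2 i (Ordinal kd) (Ordinal k'd)).
Qed.

Lemma stair_level_ge0 s t : 0 <= stair_level z s t.
Proof.
case: t => [|t] /=; first exact: ler01.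
by rewrite /stair_coord; case: drop => [|x _]; rewrite ?lexx ?(andP (zc_itv _ _)).1.
Qed.

Lemma stair_level_rcons s x t :
  (t <= size s)%N -> stair_level z (rcons s x) t = stair_level z s t.
Proof.
case: t => [|t] //= ts.
rewrite (stair_coord_nth x) ?size_rcons 1?ltnW // (stair_coord_nth x) //.
by rewrite nth_rcons ts -cats1 takel_cat // ltnW.
Qed.

Lemma stair_level_rcons_last s x :
  stair_level z (rcons s x) (size s).+1 = zc z x (count_mem x s).
Proof.
rewrite /= (stair_coord_nth x) ?size_rcons //.
by rewrite nth_rcons ltnn eqxx -cats1 takel_cat // take_size.
Qed.

(* Invariant of the greedy listing of the coordinates of z in decreasing order. *)
Definition greedy_prefix s := [/\
  forall i, (count_mem i s <= d i)%N,
  forall t, (t < size s)%N -> stair_level z s t.+1 <= stair_level z s t &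
  forall i, (count_mem i s < d i)%N ->
    zc z i (count_mem i s) <= stair_level z s (size s)].

Lemma greedy_prefix_nil : greedy_prefix [::].
Proof. by split=> // i _; case/andP: (zc_itv i 0). Qed.

Lemma greedy_prefix_rcons s : greedy_prefix s -> (size s < \sum_(i < n) d i)%N ->
  exists x, greedy_prefix (rcons s x).
Proof.
move=> [cd mono top] sN.
have [x0 x0s] : exists x, (count_mem x s < d x)%N.
  apply/existsP; apply: contraTT sN; rewrite negb_exists => /forallP sd.
  by rewrite -sum_count_mem -leqNgt; apply: leq_sum => i _; rewrite leqNgt sd.
have [x xs xmax] := @arg_maxP _ _ _ x0 (fun i => count_mem i s < d i)%N
  (fun i => zc z i (count_mem i s)) x0s.
have cnt i : count_mem i (rcons s x) = (count_mem i s + (x == i))%N.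
  by rewrite -cats1 count_cat /= addn0.
exists x; split=> [i|t|i]; rewrite ?size_rcons ?cnt.
- by case: eqP => [<-|_]; rewrite ?addn1 ?addn0.
- rewrite ltnS leq_eqVlt => /orP[/eqP ->|ts].
    by rewrite stair_level_rcons_last stair_level_rcons // top.
  by rewrite !stair_level_rcons ?mono // ltnW.
- rewrite stair_level_rcons_last.
  by case: eqP => [<-|_]; rewrite ?addn1 ?addn0 => ci; [apply: zc_mono | apply: xmax].
Qed.

Lemma exists_staircase_weight_ge0 :
  exists2 s, staircase d s & forall t, (t <= size s)%N -> 0 <= stair_weight z s t.
Proof.
have [s [sN [cd mono _]]] : exists s, size s = (\sum_(i < n) d i)%N /\ greedy_prefix s.
  suff : forall T, (T <= \sum_(i < n) d i)%N ->
      exists s, size s = T /\ greedy_prefix s by apply.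
  elim=> [|T IH] TN; first by exists [::]; split; last exact: greedy_prefix_nil.
  have [s [sT gs]] := IH (ltnW TN); rewrite -sT in TN.
  by have [x gx] := greedy_prefix_rcons gs TN; exists (rcons s x); rewrite size_rcons sT.
exists s => [|t]; first exact: staircase_of_count_le.
rewrite /stair_weight subr_ge0 leq_eqVlt => /orP[/eqP ->|]; last exact: mono.
by rewrite /= stair_coord_oversize // stair_level_ge0.
Qed.

End Greedy.

Section Hull.
Variables (R : realDomainType) (n : nat) (d : 'I_n -> nat).
Implicit Type f : (dcoord d -> R) -> R.

(* z is the convex combination of the vertices v_{j^t} with the stair weights,
   and f^pi interpolates f there; shifting every height by mu - f^pi(z) <= 0
   yields points of the hypograph. *)
Lemma conv_hypograph_stair f s z mu : staircase d s ->
  (forall t, (t <= size s)%N -> 0 <= stair_weight z s t) -> mu <= fpi f s z ->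
  conv (fun p => isVert p.1 /\ p.2 <= f p.1) (z, mu).
Proof.
move=> sd w_ge0 mu_le.
exists (size s).+1, (fun t => stair_weight z s t),
  (fun t => (@vtx R n d (jpt s t), alpha f (jpt s t) + (mu - fpi f s z))).
split=> [t|]; first by apply: w_ge0; rewrite -ltnS.
split; first exact: sum_stair_weight.
split=> [t|]; first split=> /=.
- by exists (jpt s t); split; first exact: jpt_grid.
- by rewrite /alpha; lra.
split=> [c|/=]; first exact: stair_weight_vtx.
under eq_bigr do rewrite mulrDr.
rewrite big_split /= -fpi_stair_weight -mulr_suml sum_stair_weight mul1r.
by rewrite addrCA subrr addr0.
Qed.

Theorem conv_hypograph_supermodular f z mu : supermodular f ->
  conv (fun p => isVert p.1 /\ p.2 <= f p.1) (z, mu) <->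
  inDelta z /\ forall s, staircase d s -> mu <= fpi f s z.
Proof.
move=> f_super; split=> [hull | [zD mu_le]].
  split=> [|s sd].
    by apply: inDelta_conv hull => p [[j [_ ->]] _]; apply: inDelta_vtx.
  apply: conv_le_affine hull => [|p [[j [jd ->]] le_f]]; first exact: fpi_affine.
  exact: le_trans le_f (supermodular_le_fpi f_super jd sd).
have [s sd w_ge0] := exists_staircase_weight_ge0 zD.
exact: conv_hypograph_stair sd w_ge0 (mu_le s sd).
Qed.

Lemma supermodular_opp f : submodular f -> supermodular (fun v => - f v).
Proof. by move=> f_sub u w uV wV; rewrite -!opprD lerN2; apply: f_sub. Qed.

Lemma fpi_opp f s z : fpi (fun v => - f v) s z = - fpi f s z.
Proof.
by rewrite /fpi /alpha opprD -sumrN; congr (_ + _); apply: eq_bigr => t _; ring.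
Qed.

Theorem conv_epigraph_submodular f z mu : submodular f ->
  conv (fun p => isVert p.1 /\ f p.1 <= p.2) (z, mu) <->
  inDelta z /\ forall s, staircase d s -> fpi f s z <= mu.
Proof.
move=> f_sub.
have -> : conv (fun p => isVert p.1 /\ f p.1 <= p.2) (z, mu) <->
          conv (fun p => isVert p.1 /\ p.2 <= - f p.1) (z, - mu).
  split=> /conv_oppr; rewrite ?opprK; apply: conv_sub => p [pV le]; split=> //.
    by rewrite lerNr.
  by rewrite -lerN2.
rewrite (conv_hypograph_supermodular _ _ (supermodular_opp f_sub)).
by split=> -[zD le]; split=> // s sd; have := le s sd; rewrite fpi_opp lerN2.
Qed.

End Hull.

Theorem mainTheorem12 (R : realType) (n : nat) (d : 'I_n -> nat)
  (f : (dcoord d -> R) -> R) :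
  (forall i, (1 <= d i)%N) ->
  (supermodular f ->
     forall (z : dcoord d -> R) (mu : R),
       conv (fun p => isVert p.1 /\ p.2 <= f p.1) (z, mu) <->
       (inDelta z /\ forall s, staircase d s -> mu <= fpi f s z)) /\
  (submodular f ->
     forall (z : dcoord d -> R) (mu : R),
       conv (fun p => isVert p.1 /\ f p.1 <= p.2) (z, mu) <->
       (inDelta z /\ forall s, staircase d s -> fpi f s z <= mu)).
Proof.
move=> _; split=> [f_super | f_sub] z mu.
  exact: conv_hypograph_supermodular.
exact: conv_epigraph_submodular.
Qed.
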